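(* Let $A^*\in\mathbb C^{N\times n}$ be isometric ($AA^*=I_n$), $x_0\in\mathbb C^n\setminus\{0\}$, $b=|A^*x_0|$, and let $\mathcal F(x)=A\big(b\odot\frac{A^*x}{|A^*x|}\big)$. Suppose $$\lambda_2:=\max\{\|\Im(B^*u)\|:\ u\in\mathbb C^n,\ \langle iu,x_0\rangle=0,\ \|u\|=1\}<1.$$ Then for every $0<\epsilon<1-\lambda_2^2$ there is a neighborhood of $x_0$ such that for every $x^{(1)}$ in it, the iterates $x^{(k+1)}=\mathcal F^k(x^{(1)})$ satisfy $$\|\alpha^{(k+1)}x^{(k+1)}-x_0\|\le(\lambda_2^2+\epsilon)\|\alpha^{(k)}x^{(k)}-x_0\|\quad\text{for all }k\ge1,$$ where $\alpha^{(k)}:=\arg\min\{\|\alpha x^{(k)}-x_0\|:\alpha\in\mathbb C,\ |\alpha|=1\}$. In particular $\alpha^{(k)}x^{(k)}\to x_0$ geometrically.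
   Context: $|y|$ is the componentwise modulus, $\odot$ the componentwise product, $y/|y|$ the componentwise quotient with convention $y(j)/|y(j)|=1$ if $y(j)=0$. $B:=A\,\mathrm{diag}\big(\frac{A^*x_0}{|A^*x_0|}\big)$. The real inner product on $\mathbb C^n$ is $\langle u,v\rangle=\Re(u^*v)$. *)

From Stdlib Require Import Reals List.
Open Scope R_scope.

Record Cx : Type := mkC { Cre : R; Cim : R }.

Definition C0 : Cx := mkC 0 0.
Definition C1 : Cx := mkC 1 0.
Definition Ci : Cx := mkC 0 1.
Definition Cadd (z w : Cx) : Cx := mkC (Cre z + Cre w) (Cim z + Cim w).
Definition Csub (z w : Cx) : Cx := mkC (Cre z - Cre w) (Cim z - Cim w).
Definition Cmul (z w : Cx) : Cx :=
  mkC (Cre z * Cre w - Cim z * Cim w) (Cre z * Cim w + Cim z * Cre w).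
Definition Cconj (z : Cx) : Cx := mkC (Cre z) (- Cim z).
Definition Cscale (r : R) (z : Cx) : Cx := mkC (r * Cre z) (r * Cim z).
Definition Cmod (z : Cx) : R := sqrt (Cre z ^ 2 + Cim z ^ 2).

(** z / |z|, with the convention z/|z| = 1 when z = 0 *)
Definition phase (z : Cx) : Cx :=
  if Req_dec_T (Cmod z) 0 then C1 else Cscale (/ Cmod z) z.

Definition sumC (m : nat) (f : nat -> Cx) : Cx :=
  fold_right (fun j acc => Cadd (f j) acc) C0 (seq 0 m).
Definition sumR (m : nat) (f : nat -> R) : R :=
  fold_right (fun j acc => f j + acc) 0 (seq 0 m).

(** Vectors of C^m are functions nat -> C (only indices < m matter);
    matrices are functions nat -> nat -> Cx. *)
Definition vec := nat -> Cx.
Definition mat := nat -> nat -> Cx.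

Definition vadd (u v : vec) : vec := fun i => Cadd (u i) (v i).
Definition vsub (u v : vec) : vec := fun i => Csub (u i) (v i).
Definition vsmul (a : Cx) (v : vec) : vec := fun i => Cmul a (v i).

Definition vnorm (m : nat) (v : vec) : R := sqrt (sumR m (fun i => Cmod (v i) ^ 2)).
Definition rnorm (m : nat) (v : nat -> R) : R := sqrt (sumR m (fun i => v i ^ 2)).

Definition rinner (m : nat) (u v : vec) : R :=
  Cre (sumC m (fun i => Cmul (Cconj (u i)) (v i))).

(** For A an n x N matrix: A y (y in C^N) and A^* x (x in C^n) *)
Definition matvec (n N : nat) (A : mat) (y : vec) : vec :=
  fun i => sumC N (fun j => Cmul (A i j) (y j)).
Definition adjvec (n N : nat) (A : mat) (x : vec) : vec :=
  fun j => sumC n (fun i => Cmul (Cconj (A i j)) (x i)).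

Definition AAstar_id (n N : nat) (A : mat) : Prop :=
  forall i i', (i < n)%nat -> (i' < n)%nat ->
    sumC N (fun j => Cmul (A i j) (Cconj (A i' j))) = if Nat.eqb i i' then C1 else C0.

Definition bvec (n N : nat) (A : mat) (x0 : vec) : nat -> R :=
  fun j => Cmod (adjvec n N A x0 j).

Definition Fmap (n N : nat) (A : mat) (x0 : vec) (x : vec) : vec :=
  matvec n N A (fun j => Cscale (bvec n N A x0 j) (phase (adjvec n N A x j))).

(** B = A diag(A^*x0/|A^*x0|) *)
Definition Bmat (n N : nat) (A : mat) (x0 : vec) : mat :=
  fun i j => Cmul (A i j) (phase (adjvec n N A x0 j)).

Definition imBstar_norm (n N : nat) (A : mat) (x0 u : vec) : R :=
  rnorm N (fun j => Cim (adjvec n N (Bmat n N A x0) u j)).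

Definition lam2_admissible (n : nat) (x0 u : vec) : Prop :=
  rinner n (vsmul Ci u) x0 = 0 /\ vnorm n u = 1.

Definition is_lambda2 (n N : nat) (A : mat) (x0 : vec) (lam : R) : Prop :=
  (exists u, lam2_admissible n x0 u /\ imBstar_norm n N A x0 u = lam) /\
  (forall u, lam2_admissible n x0 u -> imBstar_norm n N A x0 u <= lam).

Definition is_best_phase (n : nat) (x x0 : vec) (alpha : Cx) : Prop :=
  Cmod alpha = 1 /\
  forall beta, Cmod beta = 1 ->
    vnorm n (vsub (vsmul alpha x) x0) <= vnorm n (vsub (vsmul beta x) x0).

(** iterates: x^(k+1) = F^k (x^(1)) *)
Definition iterate (F : vec -> vec) (k : nat) (x : vec) : vec := Nat.iter k F x.

(* Align x by its best phase a and put h := a x - x0; optimality of a makes <x0, h> real.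
   As A A^* = I, a F(x) - x0 = A r with r_j = b_j phase(a (A^* x)_j) - (A^* x0)_j.  Writing
   A^* x0 = w .* b and linearizing the phase map there gives r = s + O(|h|^2 / min{b_j > 0}),
   where s = i w .* Im(B^* h) (cut down to the support of b), so |s| <= lam2 |h|.  The vector
   A s is again admissible and |A s|^2 = <Im(B^* h), Im(B^* (A s))> <= |s| lam2 |A s|, hence
   |A s| <= lam2^2 |h|.  On a small ball the aligned error thus shrinks by lam2^2 + eps < 1,
   which also keeps the aligned iterates in the ball. *)

From Pilot Require Import Defs.
From Stdlib Require Import Reals List Lra Lia Psatz.
(* Re-import so that [C1] is the complex unit rather than Stdlib's class of C^1 functions. *)
Import Pilot.Defs.
Open Scope R_scope.

Definition Copp (z : Cx) : Cx := mkC (- Cre z) (- Cim z).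

Lemma Cx_eq z w : Cre z = Cre w -> Cim z = Cim w -> z = w.
Proof. destruct z, w; simpl; intros; subst; reflexivity. Qed.

Lemma Cx_ring_theory : ring_theory C0 C1 Cadd Cmul Csub Copp (@eq Cx).
Proof. constructor; intros; apply Cx_eq; simpl; ring. Qed.
Add Ring Cx_ring : Cx_ring_theory.

Ltac cx_eq := apply Cx_eq; simpl; ring.

Lemma Cconj_add z w : Cconj (Cadd z w) = Cadd (Cconj z) (Cconj w).
Proof. cx_eq. Qed.

Lemma Cconj_mul z w : Cconj (Cmul z w) = Cmul (Cconj z) (Cconj w).
Proof. cx_eq. Qed.

Lemma Cscale_mul r z : Cscale r z = Cmul (mkC r 0) z.
Proof. cx_eq. Qed.

Lemma Cmod_sq z : Cmod z ^ 2 = Cre z ^ 2 + Cim z ^ 2.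
Proof. unfold Cmod. apply pow2_sqrt. nra. Qed.

Lemma Cmod_ge0 z : 0 <= Cmod z.
Proof. apply sqrt_pos. Qed.

Lemma Cmod_eq0 z : Cmod z = 0 -> z = C0.
Proof.
  intros H. unfold Cmod in H. apply sqrt_eq_0 in H; [|nra].
  apply Cx_eq; simpl; nra.
Qed.

Lemma Cmod_C0 : Cmod C0 = 0.
Proof. unfold Cmod. rewrite <- sqrt_0. f_equal. simpl. ring. Qed.

Lemma Cmod_C1 : Cmod C1 = 1.
Proof. unfold Cmod. rewrite <- sqrt_1. f_equal. simpl. ring. Qed.

Lemma Cmod_mul z w : Cmod (Cmul z w) = Cmod z * Cmod w.
Proof. unfold Cmod. rewrite <- sqrt_mult by nra. f_equal. simpl. ring. Qed.

Lemma Cmod_conj z : Cmod (Cconj z) = Cmod z.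
Proof. unfold Cmod. f_equal. simpl. ring. Qed.

Lemma Cmod_unit_mul a z : Cmod a = 1 -> Cmod (Cmul a z) = Cmod z.
Proof. intros H. rewrite Cmod_mul, H. ring. Qed.

Lemma Cre_le_Cmod z : Cre z <= Cmod z.
Proof.
  unfold Cmod. destruct (Rle_lt_dec (Cre z) 0).
  - pose proof (sqrt_pos (Cre z ^ 2 + Cim z ^ 2)); lra.
  - rewrite <- (sqrt_pow2 (Cre z)) at 1 by lra. apply sqrt_le_1_alt. nra.
Qed.

Lemma Cmod_unit_conj_mul z : Cmod z = 1 -> Cmul (Cconj z) z = C1.
Proof.
  intros H. assert (H2 : Cmod z ^ 2 = 1) by (rewrite H; ring).
  rewrite Cmod_sq in H2. apply Cx_eq; simpl; nra.
Qed.

Lemma Cmod_phase z : Cmod (phase z) = 1.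
Proof.
  unfold phase. destruct (Req_dec_T (Cmod z) 0) as [H|H]; [apply Cmod_C1|].
  unfold Cmod at 1. rewrite <- sqrt_1. f_equal. cbn [Cscale Cre Cim].
  pose proof (Cmod_sq z).
  replace ((/ Cmod z * Cre z) ^ 2 + (/ Cmod z * Cim z) ^ 2)
    with ((Cre z ^ 2 + Cim z ^ 2) / Cmod z ^ 2) by (field; exact H).
  rewrite <- H0. field. exact H.
Qed.

Lemma Cmod_phase_scale z : Cscale (Cmod z) (phase z) = z.
Proof.
  unfold phase. destruct (Req_dec_T (Cmod z) 0) as [H|H].
  - rewrite H, (Cmod_eq0 z H). cx_eq.
  - apply Cx_eq; simpl; field; exact H.
Qed.

Lemma phase_unit_mul a z : Cmod a = 1 -> Cmod z <> 0 -> phase (Cmul a z) = Cmul a (phase z).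
Proof.
  intros Ha Hz. unfold phase. rewrite Cmod_unit_mul by exact Ha.
  destruct (Req_dec_T (Cmod z) 0) as [H|H]; [contradiction|].
  apply Cx_eq; simpl; field; exact H.
Qed.

Lemma Cre_mul_phase_conj c : Cre (Cmul (phase (Cconj c)) c) = Cmod c.
Proof.
  unfold phase. rewrite Cmod_conj. destruct (Req_dec_T (Cmod c) 0) as [E|E].
  - rewrite (Cmod_eq0 c E), Cmod_C0. simpl. ring.
  - simpl. pose proof (Cmod_sq c). field_simplify; [|exact E].
    rewrite <- H. field. exact E.
Qed.

Lemma fold_right_addR (f : nat -> R) a l :
  fold_right (fun j acc => f j + acc) a l = fold_right (fun j acc => f j + acc) 0 l + a.
Proof. induction l; simpl; [ring | rewrite IHl; ring]. Qed.

Lemma fold_right_addC (f : nat -> Cx) a l :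
  fold_right (fun j acc => Cadd (f j) acc) a l
  = Cadd (fold_right (fun j acc => Cadd (f j) acc) C0 l) a.
Proof. induction l; simpl; [ring | rewrite IHl; ring]. Qed.

Lemma sumR_S m f : sumR (S m) f = sumR m f + f m.
Proof. unfold sumR. rewrite seq_S, fold_right_app. simpl. rewrite fold_right_addR. ring. Qed.

Lemma sumC_S m f : sumC (S m) f = Cadd (sumC m f) (f m).
Proof. unfold sumC. rewrite seq_S, fold_right_app. simpl. rewrite fold_right_addC. ring. Qed.

Lemma sumR_ext m f g : (forall i, (i < m)%nat -> f i = g i) -> sumR m f = sumR m g.
Proof. induction m; intros H; auto. rewrite !sumR_S, IHm, H; auto. Qed.

Lemma sumC_ext m f g : (forall i, (i < m)%nat -> f i = g i) -> sumC m f = sumC m g.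
Proof. induction m; intros H; auto. rewrite !sumC_S, IHm, H; auto. Qed.

Lemma sumR_plus m f g : sumR m (fun i => f i + g i) = sumR m f + sumR m g.
Proof. induction m; [cbn; ring|]. rewrite !sumR_S, IHm; ring. Qed.

Lemma sumR_scal m c f : sumR m (fun i => c * f i) = c * sumR m f.
Proof. induction m; [cbn; ring|]. rewrite !sumR_S, IHm; ring. Qed.

Lemma sumR_opp m f : sumR m (fun i => - f i) = - sumR m f.
Proof. induction m; [cbn; ring|]. rewrite !sumR_S, IHm; ring. Qed.

Lemma sumR_le m f g : (forall i, (i < m)%nat -> f i <= g i) -> sumR m f <= sumR m g.
Proof.
  induction m; intros H; [cbn; lra|]. rewrite !sumR_S.
  assert (sumR m f <= sumR m g) by auto. assert (f m <= g m) by auto. lra.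
Qed.

Lemma sumR_nonneg m f : (forall i, (i < m)%nat -> 0 <= f i) -> 0 <= sumR m f.
Proof.
  intros H. replace 0 with (sumR m (fun _ => 0)) by (induction m; [|rewrite sumR_S, IHm]; simpl; auto; ring).
  now apply sumR_le.
Qed.

Lemma sumR_ge_term m f i :
  (forall i, (i < m)%nat -> 0 <= f i) -> (i < m)%nat -> f i <= sumR m f.
Proof.
  induction m; intros H Hi; [lia|]. rewrite sumR_S.
  destruct (Nat.eq_dec i m) as [->|Hne].
  - assert (0 <= sumR m f) by (apply sumR_nonneg; auto). lra.
  - assert (f i <= sumR m f) by (apply IHm; auto; lia). assert (0 <= f m) by auto. lra.
Qed.

Lemma sumC_add m f g : sumC m (fun i => Cadd (f i) (g i)) = Cadd (sumC m f) (sumC m g).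
Proof. induction m; [cx_eq|]. rewrite !sumC_S, IHm; ring. Qed.

Lemma sumC_sub m f g : sumC m (fun i => Csub (f i) (g i)) = Csub (sumC m f) (sumC m g).
Proof. induction m; [cx_eq|]. rewrite !sumC_S, IHm; ring. Qed.

Lemma sumC_mul_l m c f : sumC m (fun i => Cmul c (f i)) = Cmul c (sumC m f).
Proof. induction m; [cx_eq|]. rewrite !sumC_S, IHm; ring. Qed.

Lemma sumC_mul_r m c f : sumC m (fun i => Cmul (f i) c) = Cmul (sumC m f) c.
Proof. induction m; [cx_eq|]. rewrite !sumC_S, IHm; ring. Qed.

Lemma sumC_conj m f : Cconj (sumC m f) = sumC m (fun i => Cconj (f i)).
Proof. induction m; [cx_eq|]. rewrite !sumC_S, Cconj_add, IHm; ring. Qed.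

Lemma sumC_zero m f : (forall i, (i < m)%nat -> f i = C0) -> sumC m f = C0.
Proof. induction m; intros H; [reflexivity|]. rewrite sumC_S, IHm, H; auto. cx_eq. Qed.

Lemma sumC_swap n N (F : nat -> nat -> Cx) :
  sumC n (fun i => sumC N (fun j => F i j)) = sumC N (fun j => sumC n (fun i => F i j)).
Proof.
  induction n.
  - symmetry. apply sumC_zero. reflexivity.
  - rewrite sumC_S, IHn, <- sumC_add. apply sumC_ext; intros. now rewrite sumC_S.
Qed.

Lemma Cre_sumC m f : Cre (sumC m f) = sumR m (fun i => Cre (f i)).
Proof. induction m; [reflexivity|]. rewrite sumC_S, sumR_S; simpl; rewrite IHm; ring. Qed.

Lemma Cim_sumC m f : Cim (sumC m f) = sumR m (fun i => Cim (f i)).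
Proof. induction m; [reflexivity|]. rewrite sumC_S, sumR_S; simpl; rewrite IHm; ring. Qed.

Lemma sumC_kronecker m i (x : nat -> Cx) : (i < m)%nat ->
  sumC m (fun i' => Cmul (if Nat.eqb i i' then C1 else C0) (x i')) = x i.
Proof.
  induction m; intros Hi; [lia|]. rewrite sumC_S.
  destruct (Nat.eqb i m) eqn:E.
  - apply Nat.eqb_eq in E; subst.
    rewrite sumC_zero; [ring|]. intros i' Hi'.
    rewrite (proj2 (Nat.eqb_neq m i')) by lia. ring.
  - apply Nat.eqb_neq in E. rewrite IHm by lia. ring.
Qed.

Definition hinner (m : nat) (u v : vec) : Cx := sumC m (fun i => Cmul (Cconj (u i)) (v i)).
Definition vnorm2 (m : nat) (v : vec) : R := sumR m (fun i => Cre (v i) ^ 2 + Cim (v i) ^ 2).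

Lemma sum_sq_ge0 x y : 0 <= x ^ 2 + y ^ 2.
Proof. nra. Qed.

Lemma sqrt_le_of_le_sq x y : 0 <= y -> x <= y ^ 2 -> sqrt x <= y.
Proof. intros Hy H. rewrite <- (sqrt_pow2 y Hy). now apply sqrt_le_1_alt. Qed.

Lemma vnorm2_ge0 m v : 0 <= vnorm2 m v.
Proof. apply sumR_nonneg; intros; apply sum_sq_ge0. Qed.

Lemma vnorm_sqrt m v : vnorm m v = sqrt (vnorm2 m v).
Proof. unfold vnorm, vnorm2. f_equal. apply sumR_ext; intros. apply Cmod_sq. Qed.

Lemma vnorm_ge0 m v : 0 <= vnorm m v.
Proof. apply sqrt_pos. Qed.

Lemma vnorm_sq m v : vnorm m v ^ 2 = vnorm2 m v.
Proof. rewrite vnorm_sqrt. apply pow2_sqrt, vnorm2_ge0. Qed.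

Lemma vnorm_ext m u v : (forall i, (i < m)%nat -> u i = v i) -> vnorm m u = vnorm m v.
Proof. intros H. unfold vnorm. f_equal. apply sumR_ext. intros. now rewrite H. Qed.

Lemma Cre_hinner_diag m v : Cre (hinner m v v) = vnorm2 m v.
Proof. unfold hinner, vnorm2. rewrite Cre_sumC. apply sumR_ext; intros; simpl; ring. Qed.

Lemma Cim_hinner_diag m v : Cim (hinner m v v) = 0.
Proof.
  unfold hinner. rewrite Cim_sumC.
  transitivity (sumR m (fun i => 0 * 0)); [apply sumR_ext; intros; simpl; ring|].
  rewrite sumR_scal. ring.
Qed.

Lemma hinner_sub_r m u v w : hinner m u (vsub v w) = Csub (hinner m u v) (hinner m u w).
Proof. unfold hinner, vsub. rewrite <- sumC_sub. apply sumC_ext; intros; ring. Qed.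

Lemma hinner_smul_r m u a v : hinner m u (vsmul a v) = Cmul a (hinner m u v).
Proof. unfold hinner, vsmul. rewrite <- sumC_mul_l. apply sumC_ext; intros; ring. Qed.

Lemma hinner_smul_l m u a v : hinner m (vsmul a u) v = Cmul (Cconj a) (hinner m u v).
Proof.
  unfold hinner, vsmul. rewrite <- sumC_mul_l. apply sumC_ext; intros.
  rewrite Cconj_mul. ring.
Qed.

Lemma hinner_conj m u v : hinner m u v = Cconj (hinner m v u).
Proof. unfold hinner. rewrite sumC_conj. apply sumC_ext; intros. cx_eq. Qed.

Lemma sumR_cauchy_schwarz m a b c d :
  sumR m (fun i => a i * b i + c i * d i)
  <= sqrt (sumR m (fun i => a i ^ 2 + c i ^ 2)) * sqrt (sumR m (fun i => b i ^ 2 + d i ^ 2)).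
Proof.
  set (P := sumR m (fun i => a i ^ 2 + c i ^ 2)).
  set (Q := sumR m (fun i => a i * b i + c i * d i)).
  set (Sb := sumR m (fun i => b i ^ 2 + d i ^ 2)).
  assert (Hquad : forall t, 0 <= P - 2 * t * Q + t ^ 2 * Sb).
  { intros t.
    replace (P - 2 * t * Q + t ^ 2 * Sb)
      with (sumR m (fun i => (a i - t * b i) ^ 2 + (c i - t * d i) ^ 2)).
    - apply sumR_nonneg; intros; apply sum_sq_ge0.
    - unfold P, Q, Sb. rewrite <- !sumR_scal. unfold Rminus.
      rewrite <- sumR_opp, <- !sumR_plus. apply sumR_ext; intros; ring. }
  assert (HP : 0 <= P) by (apply sumR_nonneg; intros; apply sum_sq_ge0).
  assert (HS : 0 <= Sb) by (apply sumR_nonneg; intros; apply sum_sq_ge0).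
  assert (0 <= sqrt P * sqrt Sb) by (apply Rmult_le_pos; apply sqrt_pos).
  destruct (Rle_lt_dec Q 0) as [HQ|HQ]; [lra|].
  destruct (Req_dec Sb 0) as [HS0|HS0].
  - specialize (Hquad ((P + 1) / (2 * Q))). rewrite HS0 in Hquad.
    assert (P - 2 * ((P + 1) / (2 * Q)) * Q = -1) by (field; lra). nra.
  - specialize (Hquad (Q / Sb)).
    replace (P - 2 * (Q / Sb) * Q + (Q / Sb) ^ 2 * Sb) with (P - Q ^ 2 / Sb) in Hquad
      by (field; lra).
    assert (Q ^ 2 <= P * Sb).
    { assert (Q ^ 2 / Sb * Sb = Q ^ 2) by (field; lra). nra. }
    rewrite <- sqrt_mult by auto. rewrite <- (sqrt_pow2 Q) by lra.
    apply sqrt_le_1_alt. lra.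
Qed.

Lemma Cre_hinner_le m u v : Cre (hinner m u v) <= vnorm m u * vnorm m v.
Proof.
  rewrite !vnorm_sqrt. unfold hinner, vnorm2. rewrite Cre_sumC.
  eapply Rle_trans; [|apply (sumR_cauchy_schwarz m (fun i => Cre (u i)) (fun i => Cre (v i))
                                                (fun i => Cim (u i)) (fun i => Cim (v i)))].
  right. apply sumR_ext; intros; simpl; ring.
Qed.

Lemma rnorm_ge0 m r : 0 <= rnorm m r.
Proof. apply sqrt_pos. Qed.

Lemma sumR_mul_le_rnorm m r q : sumR m (fun i => r i * q i) <= rnorm m r * rnorm m q.
Proof.
  unfold rnorm.
  replace (sumR m (fun i => r i * q i)) with (sumR m (fun i => r i * q i + 0 * 0))
    by (apply sumR_ext; intros; ring).
  replace (sumR m (fun i => r i ^ 2)) with (sumR m (fun i => r i ^ 2 + 0 ^ 2))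
    by (apply sumR_ext; intros; ring).
  replace (sumR m (fun i => q i ^ 2)) with (sumR m (fun i => q i ^ 2 + 0 ^ 2))
    by (apply sumR_ext; intros; ring).
  apply sumR_cauchy_schwarz.
Qed.

Lemma rnorm_ext m r q : (forall i, (i < m)%nat -> r i = q i) -> rnorm m r = rnorm m q.
Proof. intros H; unfold rnorm; f_equal; apply sumR_ext; intros; rewrite H; auto. Qed.

Lemma rnorm_scal m t r : 0 <= t -> rnorm m (fun j => t * r j) = t * rnorm m r.
Proof.
  intros Ht. unfold rnorm.
  replace (sumR m (fun i => (t * r i) ^ 2)) with (t ^ 2 * sumR m (fun i => r i ^ 2))
    by (rewrite <- sumR_scal; apply sumR_ext; intros; ring).
  rewrite sqrt_mult by (try apply pow2_ge_0; apply sumR_nonneg; intros; apply pow2_ge_0).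
  now rewrite sqrt_pow2.
Qed.

Lemma rnorm_le m r q : (forall i, (i < m)%nat -> r i ^ 2 <= q i ^ 2) -> rnorm m r <= rnorm m q.
Proof. intros H. apply sqrt_le_1_alt, sumR_le; auto. Qed.

Lemma vnorm_triangle m u v : vnorm m (vadd u v) <= vnorm m u + vnorm m v.
Proof.
  rewrite (vnorm_sqrt m (vadd u v)). apply sqrt_le_of_le_sq.
  - pose proof (vnorm_ge0 m u); pose proof (vnorm_ge0 m v); lra.
  - replace (vnorm2 m (vadd u v)) with (vnorm2 m u + vnorm2 m v + 2 * Cre (hinner m u v)).
    + rewrite <- !vnorm_sq. pose proof (Cre_hinner_le m u v). nra.
    + unfold vnorm2, hinner. rewrite Cre_sumC, <- sumR_scal, <- !sumR_plus.
      apply sumR_ext; intros; unfold vadd; simpl; ring.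
Qed.

Lemma Cmod_le_vnorm m v i : (i < m)%nat -> Cmod (v i) <= vnorm m v.
Proof.
  intros Hi. rewrite vnorm_sqrt, <- (sqrt_pow2 (Cmod (v i))) by apply Cmod_ge0.
  apply sqrt_le_1_alt. rewrite Cmod_sq.
  apply (sumR_ge_term m (fun i => Cre (v i) ^ 2 + Cim (v i) ^ 2)); auto. intros; apply sum_sq_ge0.
Qed.

Lemma vnorm_eq0 m u : vnorm m u = 0 -> forall i, (i < m)%nat -> u i = C0.
Proof.
  intros H i Hi. apply Cmod_eq0.
  pose proof (Cmod_le_vnorm m u i Hi). pose proof (Cmod_ge0 (u i)). lra.
Qed.

Lemma vnorm_smul m a u : vnorm m (vsmul a u) = Cmod a * vnorm m u.
Proof.
  rewrite !vnorm_sqrt, <- (sqrt_pow2 (Cmod a)) by apply Cmod_ge0.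
  rewrite <- sqrt_mult by (try apply pow2_ge_0; apply vnorm2_ge0). f_equal.
  unfold vnorm2. rewrite <- sumR_scal. apply sumR_ext; intros.
  rewrite Cmod_sq. unfold vsmul; simpl; ring.
Qed.

Lemma vnorm_le_pointwise m u v K : 0 <= K ->
  (forall j, (j < m)%nat -> Cmod (u j) <= K * Cmod (v j)) -> vnorm m u <= K * vnorm m v.
Proof.
  intros HK H. rewrite !vnorm_sqrt, <- (sqrt_pow2 K HK).
  rewrite <- sqrt_mult by (try apply pow2_ge_0; apply vnorm2_ge0). apply sqrt_le_1_alt.
  unfold vnorm2. rewrite <- sumR_scal. apply sumR_le. intros j Hj.
  rewrite <- !Cmod_sq. specialize (H j Hj). pose proof (Cmod_ge0 (u j)).
  replace (K ^ 2 * Cmod (v j) ^ 2) with ((K * Cmod (v j)) ^ 2) by ring. now apply pow_incr.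
Qed.

(** * Matrices with [A A^* = I] *)

Lemma matvec_add n N A s t i :
  matvec n N A (fun j => Cadd (s j) (t j)) i = Cadd (matvec n N A s i) (matvec n N A t i).
Proof. unfold matvec. rewrite <- sumC_add. apply sumC_ext; intros; ring. Qed.

Lemma matvec_sub n N A s t i :
  matvec n N A (fun j => Csub (s j) (t j)) i = Csub (matvec n N A s i) (matvec n N A t i).
Proof. unfold matvec. rewrite <- sumC_sub. apply sumC_ext; intros; ring. Qed.

Lemma matvec_mul_l n N A a s i :
  matvec n N A (fun j => Cmul a (s j)) i = Cmul a (matvec n N A s i).
Proof. unfold matvec. rewrite <- sumC_mul_l. apply sumC_ext; intros; ring. Qed.

Lemma adjvec_sub n N A x y j :
  adjvec n N A (vsub x y) j = Csub (adjvec n N A x j) (adjvec n N A y j).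
Proof. unfold adjvec, vsub. rewrite <- sumC_sub. apply sumC_ext; intros; ring. Qed.

Lemma adjvec_smul n N A a x j : adjvec n N A (vsmul a x) j = Cmul a (adjvec n N A x j).
Proof. unfold adjvec, vsmul. rewrite <- sumC_mul_l. apply sumC_ext; intros; ring. Qed.

Lemma hinner_matvec_l n N A s w :
  hinner n (matvec n N A s) w = hinner N s (adjvec n N A w).
Proof.
  unfold hinner, matvec, adjvec.
  transitivity (sumC n (fun i => sumC N (fun j =>
                  Cmul (Cmul (Cconj (s j)) (Cconj (A i j))) (w i)))).
  { apply sumC_ext; intros. rewrite sumC_conj, <- sumC_mul_r. apply sumC_ext; intros.
    rewrite Cconj_mul. ring. }
  rewrite sumC_swap. apply sumC_ext; intros. rewrite <- sumC_mul_l. apply sumC_ext; intros. ring.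
Qed.

Section Isometry.
Variables (n N : nat) (A : mat).
Hypothesis hA : AAstar_id n N A.

Lemma matvec_adjvec x i : (i < n)%nat -> matvec n N A (adjvec n N A x) i = x i.
Proof.
  intros Hi. unfold matvec, adjvec.
  transitivity (sumC N (fun j => sumC n (fun i' => Cmul (Cmul (A i j) (Cconj (A i' j))) (x i')))).
  { apply sumC_ext; intros. rewrite <- sumC_mul_l. apply sumC_ext; intros; ring. }
  rewrite <- sumC_swap.
  transitivity (sumC n (fun i' => Cmul (if Nat.eqb i i' then C1 else C0) (x i'))).
  { apply sumC_ext; intros i' Hi'. rewrite sumC_mul_r, hA; auto. }
  now apply sumC_kronecker.
Qed.

Lemma hinner_adjvec x y : hinner N (adjvec n N A x) (adjvec n N A y) = hinner n x y.
Proof.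
  rewrite <- hinner_matvec_l. unfold hinner. apply sumC_ext; intros.
  rewrite matvec_adjvec; auto.
Qed.

Lemma vnorm_adjvec x : vnorm N (adjvec n N A x) = vnorm n x.
Proof. rewrite !vnorm_sqrt, <- !Cre_hinner_diag, hinner_adjvec. reflexivity. Qed.

Lemma vnorm_matvec_le s : vnorm n (matvec n N A s) <= vnorm N s.
Proof.
  pose proof (Cre_hinner_le N s (adjvec n N A (matvec n N A s))) as H.
  rewrite <- hinner_matvec_l, vnorm_adjvec, Cre_hinner_diag, <- vnorm_sq in H.
  pose proof (vnorm_ge0 n (matvec n N A s)). pose proof (vnorm_ge0 N s).
  destruct (Req_dec (vnorm n (matvec n N A s)) 0); [lra|]. nra.
Qed.

End Isometry.

(** * Best phase alignment *)

Section BestPhase.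
Variables (m : nat) (x x0 : vec).

Lemma vnorm_rotate_sub_sq b : Cmod b = 1 ->
  vnorm m (vsub (vsmul b x) x0) ^ 2
  = vnorm2 m x + vnorm2 m x0 - 2 * Cre (Cmul b (hinner m x0 x)).
Proof.
  intros Hb. pose proof (Cmod_sq b) as Hb2. rewrite Hb in Hb2.
  rewrite vnorm_sq. unfold hinner. rewrite <- sumC_mul_l, Cre_sumC. unfold vnorm2.
  rewrite <- sumR_scal. unfold Rminus. rewrite <- sumR_opp, <- !sumR_plus.
  apply sumR_ext; intros. unfold vsub, vsmul; simpl. apply Rminus_diag_uniq.
  replace (_ - _) with ((Cre b ^ 2 + Cim b ^ 2 - 1) * (Cre (x i) ^ 2 + Cim (x i) ^ 2)) by ring.
  rewrite <- Hb2. ring.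
Qed.

Lemma is_best_phase_iff a : is_best_phase m x x0 a <->
  Cmod a = 1 /\ forall b, Cmod b = 1 ->
    Cre (Cmul b (hinner m x0 x)) <= Cre (Cmul a (hinner m x0 x)).
Proof.
  split; intros [Ha H]; split; auto; intros b Hb; specialize (H b Hb).
  - assert (vnorm m (vsub (vsmul a x) x0) ^ 2 <= vnorm m (vsub (vsmul b x) x0) ^ 2)
      by (apply pow_incr; split; [apply vnorm_ge0 | exact H]).
    rewrite !vnorm_rotate_sub_sq in * by auto. lra.
  - assert (vnorm m (vsub (vsmul a x) x0) ^ 2 <= vnorm m (vsub (vsmul b x) x0) ^ 2)
      by (rewrite !vnorm_rotate_sub_sq by auto; lra).
    pose proof (vnorm_ge0 m (vsub (vsmul a x) x0)). pose proof (vnorm_ge0 m (vsub (vsmul b x) x0)).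
    nra.
Qed.

Lemma best_phase_exists : exists a, is_best_phase m x x0 a.
Proof.
  set (c := hinner m x0 x). exists (phase (Cconj c)).
  apply is_best_phase_iff. split; [apply Cmod_phase|]. intros b Hb. fold c.
  rewrite Cre_mul_phase_conj, <- (Cmod_unit_mul b c Hb). apply Cre_le_Cmod.
Qed.

Lemma best_phase_Cim a : is_best_phase m x x0 a -> Cim (Cmul a (hinner m x0 x)) = 0.
Proof.
  intros Hbest. apply is_best_phase_iff in Hbest as [Ha Hmax]. set (c := hinner m x0 x) in *.
  pose proof (Hmax _ (Cmod_phase (Cconj c))) as Hge. rewrite Cre_mul_phase_conj in Hge.
  pose proof (Cmod_sq (Cmul a c)) as Hsq. rewrite Cmod_unit_mul in Hsq by exact Ha.
  pose proof (Cmod_ge0 c). set (re := Cre (Cmul a c)) in *. set (im := Cim (Cmul a c)) in *.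
  apply Rsqr_0_uniq. unfold Rsqr. nra.
Qed.

End BestPhase.

(** * Linearization of the phase map *)

Lemma phase_linearization b g : 0 < b -> Cmod g <= b / 2 ->
  Cmod (Csub (Cscale b (phase (Cadd (mkC b 0) g))) (mkC b (Cim g))) <= 6 * Cmod g ^ 2 / b.
Proof.
  intros Hb Hg.
  set (z := Cadd (mkC b 0) g). set (p := Cre g). set (q := Cim g). set (r := Cmod g) in *.
  assert (Hr0 : 0 <= r) by apply Cmod_ge0.
  assert (Hr2 : p ^ 2 + q ^ 2 = r ^ 2) by (symmetry; apply Cmod_sq).
  assert (Hp : - r <= p <= r) by (split; nra).
  set (s := Cmod z).
  assert (Hs2 : s ^ 2 = (b + p) ^ 2 + q ^ 2) by (unfold s; rewrite Cmod_sq; unfold z; simpl; fold p q; ring).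
  assert (Hs0 : 0 <= s) by apply Cmod_ge0.
  assert (Hs_lo : b / 2 <= s) by nra.
  assert (Hs_dev : (s - b) ^ 2 <= r ^ 2).
  { assert (s <= b + r) by nra. assert (b - r <= s) by nra. nra. }
  assert (Hphase : phase z = Cscale (/ s) z).
  { unfold phase. fold s. destruct (Req_dec_T s 0); [lra | reflexivity]. }
  rewrite Hphase. unfold Cmod at 1. apply sqrt_le_of_le_sq.
  { apply Rmult_le_pos; [nra | left; now apply Rinv_0_lt_compat]. }
  cbn [Csub Cscale Cadd Cre Cim z]. fold p q.
  set (X := b * (/ s * (b + p)) - b). set (Y := b * (/ s * (0 + q)) - q).
  (* [X] and [Y] are the real and imaginary parts of the error; clearing the
     denominators [s (b + p + s)] and [s] exhibits them as quadratic in [g]. *)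
  assert (HX : X * (s * (b + p + s)) = - (b * q ^ 2)).
  { unfold X. field_simplify; [|lra].
    replace (b * (b + p) * (b + p + s) - b * s * (b + p + s)) with (b * ((b + p) ^ 2 - s ^ 2))
      by ring.
    rewrite Hs2. ring. }
  assert (HY : Y * s = q * (b - s)) by (unfold Y; field; lra).
  assert (HX2 : X ^ 2 * b ^ 2 <= 4 * r ^ 4).
  { assert (Hden : b ^ 2 / 2 <= s * (b + p + s)) by nra.
    assert (X ^ 2 * (s * (b + p + s)) ^ 2 <= b ^ 2 * r ^ 4).
    { replace (X ^ 2 * (s * (b + p + s)) ^ 2) with ((X * (s * (b + p + s))) ^ 2) by ring.
      rewrite HX. replace ((- (b * q ^ 2)) ^ 2) with (b ^ 2 * (q ^ 2) ^ 2) by ring.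
      replace (b ^ 2 * r ^ 4) with (b ^ 2 * (r ^ 2) ^ 2) by ring.
      apply Rmult_le_compat_l; [nra|]. apply pow_incr. split; nra. }
    assert (X ^ 2 * (b ^ 2 / 2) ^ 2 <= X ^ 2 * (s * (b + p + s)) ^ 2).
    { apply Rmult_le_compat_l; [nra|]. apply pow_incr. nra. }
    nra. }
  assert (HY2 : Y ^ 2 * b ^ 2 <= 4 * r ^ 4).
  { assert (Y ^ 2 * s ^ 2 <= r ^ 4).
    { replace (Y ^ 2 * s ^ 2) with ((Y * s) ^ 2) by ring. rewrite HY.
      replace ((q * (b - s)) ^ 2) with (q ^ 2 * (s - b) ^ 2) by ring.
      assert (q ^ 2 <= r ^ 2) by nra.
      replace (r ^ 4) with (r ^ 2 * r ^ 2) by ring.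
      apply Rmult_le_compat; auto using pow2_ge_0. }
    assert (Y ^ 2 * (b / 2) ^ 2 <= Y ^ 2 * s ^ 2).
    { apply Rmult_le_compat_l; [nra|]. apply pow_incr. lra. }
    nra. }
  replace ((6 * r ^ 2 / b) ^ 2) with (36 * r ^ 4 / b ^ 2) by (field; lra).
  apply (Rmult_le_reg_r (b ^ 2)); [nra|].
  replace (36 * r ^ 4 / b ^ 2 * b ^ 2) with (36 * r ^ 4) by (field; lra).
  nra.
Qed.

Lemma Cmod_add_real_neq0 b g : 0 < b -> Cmod g <= b / 2 -> Cmod (Cadd (mkC b 0) g) <> 0.
Proof.
  intros Hb Hg Hz. destruct g as [p q]. pose proof (Cmod_eq0 _ Hz) as E.
  injection E as Ep Eq. pose proof (Cmod_sq (mkC p q)) as Hg2. simpl in Hg2.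
  pose proof (Cmod_ge0 (mkC p q)). set (r := Cmod (mkC p q)) in *.
  assert (r * r <= b / 2 * (b / 2)) by (apply Rmult_le_compat; lra).
  replace p with (- b) in Hg2 by lra. nra.
Qed.

Lemma phase_linearization_rotated c w : 0 < Cmod c -> Cmod (Csub w c) <= Cmod c / 2 ->
  Cmod (Csub (Csub (Cscale (Cmod c) (phase w)) c)
             (Cmul (phase c) (mkC 0 (Cim (Cmul (Cconj (phase c)) (Csub w c))))))
  <= 6 * Cmod (Csub w c) ^ 2 / Cmod c.
Proof.
  intros Hb Hwc.
  set (b := Cmod c) in *. set (om := phase c). set (g := Cmul (Cconj om) (Csub w c)).
  assert (Hom : Cmod om = 1) by apply Cmod_phase.
  assert (Hc : c = Cmul om (mkC b 0)).
  { rewrite <- (Cmod_phase_scale c) at 1. fold b om. cx_eq. }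
  assert (Hw : w = Cmul om (Cadd (mkC b 0) g)).
  { unfold g. transitivity (Cadd c (Cmul (Cmul (Cconj om) om) (Csub w c))).
    - rewrite Cmod_unit_conj_mul by exact Hom. ring.
    - rewrite Hc at 1. ring. }
  assert (Hg : Cmod g = Cmod (Csub w c)) by (unfold g; rewrite Cmod_mul, Cmod_conj, Hom; ring).
  assert (Hz : Cmod (Cadd (mkC b 0) g) <> 0)
    by (apply Cmod_add_real_neq0; [exact Hb | rewrite Hg; exact Hwc]).
  rewrite Hw at 1. rewrite phase_unit_mul by assumption. fold g. rewrite <- Hg.
  replace (Csub (Csub (Cscale b (Cmul om (phase (Cadd (mkC b 0) g)))) c) (Cmul om (mkC 0 (Cim g))))
    with (Cmul om (Csub (Cscale b (phase (Cadd (mkC b 0) g))) (mkC b (Cim g))))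
    by (rewrite Hc, !Cscale_mul; cx_eq).
  rewrite Cmod_unit_mul by exact Hom.
  apply phase_linearization; [exact Hb | rewrite Hg; exact Hwc].
Qed.

(** * One step of the iteration *)

Lemma rinner_Ci_l m u v : rinner m (vsmul Ci u) v = Cim (hinner m u v).
Proof. unfold rinner. fold (hinner m (vsmul Ci u) v). rewrite hinner_smul_l. simpl. ring. Qed.

Lemma Cim_hinner_swap m u v : Cim (hinner m u v) = - Cim (hinner m v u).
Proof. rewrite hinner_conj. reflexivity. Qed.

Section Step.
Variables (n N : nat) (A : mat) (x0 : vec) (lam2 : R).
Hypothesis hA : AAstar_id n N A.
Hypothesis hlam : is_lambda2 n N A x0 lam2.

Definition x0phase (j : nat) : Cx := phase (adjvec n N A x0 j).

Lemma adjvec_Bmat u j : adjvec n N (Bmat n N A x0) u j = Cmul (Cconj (x0phase j)) (adjvec n N A u j).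
Proof.
  unfold adjvec, Bmat, x0phase. rewrite <- sumC_mul_l. apply sumC_ext; intros.
  rewrite Cconj_mul. ring.
Qed.

Lemma lam2_ge0 : 0 <= lam2.
Proof. destruct hlam as [[u [_ <-]] _]. apply rnorm_ge0. Qed.

Lemma imBstar_norm_le u : Cim (hinner n u x0) = 0 -> imBstar_norm n N A x0 u <= lam2 * vnorm n u.
Proof.
  intros Hu. pose proof lam2_ge0.
  destruct (Req_dec (vnorm n u) 0) as [H0|H0].
  - rewrite H0. unfold imBstar_norm.
    rewrite (rnorm_ext N _ (fun _ => 0 * 0)) by
      (intros j Hj; rewrite adjvec_Bmat; unfold adjvec;
       rewrite sumC_zero; [simpl; ring | intros i Hi; rewrite (vnorm_eq0 n u H0 i Hi); cx_eq]).
    rewrite rnorm_scal by lra. lra.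
  - set (t := / vnorm n u).
    assert (Ht : 0 < t) by (apply Rinv_0_lt_compat; pose proof (vnorm_ge0 n u); lra).
    assert (Hadm : lam2_admissible n x0 (vsmul (mkC t 0) u)).
    { split.
      - rewrite rinner_Ci_l, hinner_smul_l. simpl. rewrite Hu. ring.
      - rewrite vnorm_smul. unfold Cmod; simpl.
        replace (t * (t * 1) + 0 * (0 * 1)) with (t ^ 2) by ring.
        rewrite sqrt_pow2 by lra. unfold t. field. exact H0. }
    destruct hlam as [_ Hmax]. specialize (Hmax _ Hadm). unfold imBstar_norm in *.
    rewrite (rnorm_ext N _ (fun j => t * Cim (adjvec n N (Bmat n N A x0) u j))) in Hmax
      by (intros j Hj; rewrite !adjvec_Bmat, adjvec_smul; simpl; ring).
    rewrite rnorm_scal in Hmax by lra.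
    apply (Rmult_le_reg_l t); [exact Ht|].
    replace (t * (lam2 * vnorm n u)) with lam2 by (unfold t; field; exact H0). exact Hmax.
Qed.

(* The smallest nonzero entry of [b], or [1] if there is none. *)
Definition bmin : R :=
  fold_right (fun j acc => if Req_dec_T (bvec n N A x0 j) 0 then acc
                           else Rmin (bvec n N A x0 j) acc) 1 (seq 0 N).

Lemma bmin_pos : 0 < bmin.
Proof.
  unfold bmin. induction (seq 0 N) as [|j l IH]; simpl; [lra|].
  destruct (Req_dec_T (bvec n N A x0 j) 0) as [E|E]; auto.
  apply Rmin_glb_lt; auto. pose proof (Cmod_ge0 (adjvec n N A x0 j)). unfold bvec in *. lra.
Qed.

Lemma bmin_le j : (j < N)%nat -> bvec n N A x0 j <> 0 -> bmin <= bvec n N A x0 j.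
Proof.
  intros Hj Hb. assert (Hin : In j (seq 0 N)) by (apply in_seq; lia).
  unfold bmin. induction (seq 0 N) as [|k l IH]; simpl in *; [tauto|].
  destruct Hin as [->|Hin].
  - destruct (Req_dec_T (bvec n N A x0 j) 0); [contradiction | apply Rmin_l].
  - destruct (Req_dec_T (bvec n N A x0 k) 0); auto.
    eapply Rle_trans; [apply Rmin_r | auto].
Qed.

(* The differential at [A^* x0] of [y |-> b .* y / |y|] maps [g] to
   [i x0phase Im(conj(x0phase) g)] on the support of [b], and to [0] off it. *)
Definition lin_coef (h : vec) (j : nat) : R :=
  if Req_dec_T (bvec n N A x0 j) 0 then 0
  else Cim (Cmul (Cconj (x0phase j)) (adjvec n N A h j)).

Definition lin_dir (h : vec) (j : nat) : Cx := Cmul (x0phase j) (mkC 0 (lin_coef h j)).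

Lemma adjvec_x0_polar j : adjvec n N A x0 j = Cmul (x0phase j) (mkC (bvec n N A x0 j) 0).
Proof.
  unfold x0phase, bvec. rewrite <- (Cmod_phase_scale (adjvec n N A x0 j)) at 1. cx_eq.
Qed.

Lemma rnorm_lin_coef_le h : Cim (hinner n x0 h) = 0 -> rnorm N (lin_coef h) <= lam2 * vnorm n h.
Proof.
  intros Hh. apply Rle_trans with (imBstar_norm n N A x0 h).
  - apply rnorm_le. intros j Hj. rewrite adjvec_Bmat. unfold lin_coef.
    destruct (Req_dec_T (bvec n N A x0 j) 0); [|lra]. rewrite pow_i by lia. apply pow2_ge_0.
  - apply imBstar_norm_le. rewrite Cim_hinner_swap, Hh. ring.
Qed.

Lemma lin_part_orthogonal h :
  Cim (hinner n x0 h) = 0 -> Cim (hinner n (matvec n N A (lin_dir h)) x0) = 0.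
Proof.
  intros Hh. rewrite hinner_matvec_l. unfold hinner. rewrite Cim_sumC.
  rewrite (sumR_ext N _ (fun j => - Cim (Cmul (Cconj (adjvec n N A x0 j)) (adjvec n N A h j)))).
  - rewrite sumR_opp, <- Cim_sumC. fold (hinner N (adjvec n N A x0) (adjvec n N A h)).
    rewrite hinner_adjvec, Hh by exact hA. ring.
  - intros j Hj. rewrite adjvec_x0_polar. unfold lin_dir, lin_coef.
    assert (Hom : Cmul (Cconj (x0phase j)) (x0phase j) = C1)
      by (apply Cmod_unit_conj_mul, Cmod_phase).
    destruct (Req_dec_T (bvec n N A x0 j) 0) as [E|E].
    + rewrite E. simpl. ring.
    + set (om := x0phase j) in *. set (g := adjvec n N A h j).
      replace (Cmul (Cconj (Cmul om (mkC 0 (Cim (Cmul (Cconj om) g)))))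
                    (Cmul om (mkC (bvec n N A x0 j) 0)))
        with (Cmul (Cmul (Cconj om) om) (mkC 0 (- (Cim (Cmul (Cconj om) g) * bvec n N A x0 j))))
        by (rewrite Cconj_mul; cx_eq).
      replace (Cmul (Cconj (Cmul om (mkC (bvec n N A x0 j) 0))) g)
        with (Cmul (mkC (bvec n N A x0 j) 0) (Cmul (Cconj om) g))
        by (rewrite Cconj_mul; cx_eq).
      rewrite Hom. simpl. ring.
Qed.

Lemma vnorm_lin_part_le h :
  Cim (hinner n x0 h) = 0 -> vnorm n (matvec n N A (lin_dir h)) <= lam2 ^ 2 * vnorm n h.
Proof.
  intros Hh. set (u := matvec n N A (lin_dir h)).
  assert (Hu : vnorm n u <= lam2 * rnorm N (lin_coef h)).
  { assert (Hsq : vnorm2 n u <= rnorm N (lin_coef h) * (lam2 * vnorm n u)).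
    { rewrite <- Cre_hinner_diag. unfold u at 1. rewrite hinner_matvec_l.
      unfold hinner. rewrite Cre_sumC.
      rewrite (sumR_ext N _ (fun j => lin_coef h j * Cim (adjvec n N (Bmat n N A x0) u j)))
        by (intros j Hj; rewrite adjvec_Bmat; unfold lin_dir; simpl; ring).
      eapply Rle_trans; [apply sumR_mul_le_rnorm|].
      apply Rmult_le_compat_l; [apply rnorm_ge0|]. apply imBstar_norm_le.
      now apply lin_part_orthogonal. }
    rewrite <- vnorm_sq in Hsq. pose proof (vnorm_ge0 n u). pose proof (rnorm_ge0 N (lin_coef h)).
    pose proof lam2_ge0.
    set (v := vnorm n u) in *. set (r := rnorm N (lin_coef h)) in *.
    destruct (Req_dec v 0) as [E|E]; [rewrite E; nra|].
    apply (Rmult_le_reg_r v); [lra | nra]. }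
  pose proof (rnorm_lin_coef_le h Hh). pose proof lam2_ge0. nra.
Qed.

Definition residual (a : Cx) (x : vec) (j : nat) : Cx :=
  Csub (Cmul a (Cscale (bvec n N A x0 j) (phase (adjvec n N A x j)))) (adjvec n N A x0 j).

Lemma vnorm_rotated_Fmap_sub a x :
  vnorm n (vsub (vsmul a (Fmap n N A x0 x)) x0) = vnorm n (matvec n N A (residual a x)).
Proof.
  apply vnorm_ext; intros i Hi. unfold residual.
  rewrite matvec_sub, matvec_mul_l, matvec_adjvec by assumption. reflexivity.
Qed.

Lemma Cmod_residual_sub_lin_le a x j :
  let h := vsub (vsmul a x) x0 in
  Cmod a = 1 -> (j < N)%nat -> vnorm n h <= bmin / 2 ->
  Cmod (Csub (residual a x j) (lin_dir h j)) <= 6 * vnorm n h / bmin * Cmod (adjvec n N A h j).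
Proof.
  intros h Ha Hj Hd. pose proof bmin_pos.
  set (d := vnorm n h) in *. set (c := adjvec n N A x0 j). set (g := adjvec n N A h j).
  assert (Hg : Cmod g <= d) by (unfold d; rewrite <- (vnorm_adjvec n N A hA h); now apply Cmod_le_vnorm).
  assert (Hg0 : 0 <= Cmod g) by apply Cmod_ge0.
  assert (Hgwc : g = Csub (Cmul a (adjvec n N A x j)) c)
    by (unfold g, h; rewrite adjvec_sub, adjvec_smul; reflexivity).
  unfold residual, lin_dir, lin_coef. fold c g.
  destruct (Req_dec_T (bvec n N A x0 j) 0) as [E|E].
  - assert (Hc : c = C0) by (apply Cmod_eq0; exact E).
    rewrite E, Hc. replace (Csub _ _) with C0 by cx_eq. rewrite Cmod_C0.
    apply Rmult_le_pos; [|exact Hg0]. apply Rmult_le_pos; [|left; now apply Rinv_0_lt_compat].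
    pose proof (vnorm_ge0 n h). lra.
  - assert (Hb : bmin <= Cmod c) by (now apply bmin_le).
    assert (Hwc : Cmod (Csub (Cmul a (adjvec n N A x j)) c) <= Cmod c / 2) by (rewrite <- Hgwc; lra).
    assert (Hz : Cmod (adjvec n N A x j) <> 0).
    { intros Hz. rewrite (Cmod_eq0 _ Hz) in Hwc.
      replace (Cmod (Csub (Cmul a C0) c)) with (Cmod c) in Hwc by (unfold Cmod; f_equal; simpl; ring).
      lra. }
    replace (Cmul a (Cscale (bvec n N A x0 j) (phase (adjvec n N A x j))))
      with (Cscale (Cmod c) (phase (Cmul a (adjvec n N A x j))))
      by (rewrite phase_unit_mul by assumption; unfold bvec; fold c; cx_eq).
    unfold x0phase. fold c. rewrite Hgwc.
    eapply Rle_trans; [apply phase_linearization_rotated; lra|]. rewrite <- Hgwc.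
    set (G := Cmod g) in *. apply Rle_trans with (6 * G ^ 2 / bmin).
    + unfold Rdiv. apply Rmult_le_compat_l; [nra | apply Rinv_le_contravar; lra].
    + replace (6 * G ^ 2 / bmin) with (6 * G / bmin * G) by (field; lra).
      replace (6 * d / bmin * G) with (6 * G / bmin * d) by (field; lra).
      apply Rmult_le_compat_l; [|exact Hg].
      unfold Rdiv. apply Rmult_le_pos; [lra | left; now apply Rinv_0_lt_compat].
Qed.

Lemma vnorm_residual_sub_lin_le a x :
  let h := vsub (vsmul a x) x0 in
  Cmod a = 1 -> vnorm n h <= bmin / 2 ->
  vnorm N (fun j => Csub (residual a x j) (lin_dir h j)) <= 6 * vnorm n h / bmin * vnorm n h.
Proof.
  intros h Ha Hd. pose proof bmin_pos. rewrite <- (vnorm_adjvec n N A hA h) at 2.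
  apply vnorm_le_pointwise.
  - pose proof (vnorm_ge0 n h). unfold Rdiv.
    apply Rmult_le_pos; [lra | left; now apply Rinv_0_lt_compat].
  - intros j Hj. now apply Cmod_residual_sub_lin_le.
Qed.

Definition delta (eps : R) : R := Rmin (bmin / 2) (eps * bmin / 6).

Lemma best_phase_contraction eps x a a' : 0 < eps ->
  is_best_phase n x x0 a -> is_best_phase n (Fmap n N A x0 x) x0 a' ->
  vnorm n (vsub (vsmul a x) x0) <= delta eps ->
  vnorm n (vsub (vsmul a' (Fmap n N A x0 x)) x0) <= (lam2 ^ 2 + eps) * vnorm n (vsub (vsmul a x) x0).
Proof.
  intros Heps Ha Ha' Hd. pose proof bmin_pos.
  set (h := vsub (vsmul a x) x0) in *. set (d := vnorm n h) in *.
  assert (Hd1 : d <= bmin / 2) by (eapply Rle_trans; [exact Hd | apply Rmin_l]).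
  assert (Hd2 : d <= eps * bmin / 6) by (eapply Rle_trans; [exact Hd | apply Rmin_r]).
  assert (Hamod : Cmod a = 1) by apply Ha.
  assert (Hh : Cim (hinner n x0 h) = 0).
  { unfold h. rewrite hinner_sub_r, hinner_smul_r. unfold Csub. cbn [Cim].
    rewrite (best_phase_Cim n x x0 a Ha), Cim_hinner_diag. ring. }
  set (s := lin_dir h). set (t := residual a x).
  assert (Hsplit : vnorm n (matvec n N A t)
                   <= vnorm n (matvec n N A s) + vnorm N (fun j => Csub (t j) (s j))).
  { rewrite (vnorm_ext n _ (vadd (matvec n N A s) (matvec n N A (fun j => Csub (t j) (s j))))).
    - eapply Rle_trans; [apply vnorm_triangle|].
      apply Rplus_le_compat_l, vnorm_matvec_le; exact hA.
    - intros i Hi. unfold vadd. rewrite <- matvec_add. apply sumC_ext; intros; ring. }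
  assert (Hlin : vnorm n (matvec n N A s) <= lam2 ^ 2 * d) by now apply vnorm_lin_part_le.
  assert (Hrem : vnorm N (fun j => Csub (t j) (s j)) <= eps * d).
  { eapply Rle_trans; [now apply vnorm_residual_sub_lin_le|]. fold h d.
    apply Rmult_le_compat_r; [apply vnorm_ge0|].
    apply (Rmult_le_reg_r bmin); [lra|].
    replace (6 * d / bmin * bmin) with (6 * d) by (field; lra). lra. }
  eapply Rle_trans; [apply (proj2 Ha' a Hamod)|].
  rewrite vnorm_rotated_Fmap_sub. fold t. lra.
Qed.

End Step.

Theorem mainTheorem9 (n N : nat) (A : mat) (x0 : vec) (lam2 : R)
  (hA : AAstar_id n N A)
  (hx0 : exists i, (i < n)%nat /\ x0 i <> C0)
  (hlam : is_lambda2 n N A x0 lam2)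
  (hlam1 : lam2 < 1) :
  forall eps, 0 < eps -> eps < 1 - lam2 ^ 2 ->
  exists delta, 0 < delta /\
    forall x1 : vec, vnorm n (vsub x1 x0) < delta ->
    forall (k : nat) (ak ak1 : Cx),
      is_best_phase n (iterate (Fmap n N A x0) k x1) x0 ak ->
      is_best_phase n (iterate (Fmap n N A x0) (S k) x1) x0 ak1 ->
      vnorm n (vsub (vsmul ak1 (iterate (Fmap n N A x0) (S k) x1)) x0)
        <= (lam2 ^ 2 + eps) *
           vnorm n (vsub (vsmul ak (iterate (Fmap n N A x0) k x1)) x0).
Proof.
  intros eps heps heps1.
  pose proof (bmin_pos n N A x0) as Hbmin. pose proof (lam2_ge0 n N A x0 lam2 hlam).
  exists (delta n N A x0 eps). split.
  { apply Rmin_glb_lt; [lra|]. apply Rmult_lt_0_compat; [nra | lra]. }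
  intros x1 Hx1.
  set (F := Fmap n N A x0).
  (* Since [lam2 ^ 2 + eps < 1], every aligned iterate stays in the ball of radius [delta]. *)
  assert (Hball : forall k a, is_best_phase n (iterate F k x1) x0 a ->
                    vnorm n (vsub (vsmul a (iterate F k x1)) x0) < delta n N A x0 eps).
  { induction k as [|k IH]; intros a Ha.
    - eapply Rle_lt_trans; [apply (proj2 Ha C1 Cmod_C1)|].
      rewrite (vnorm_ext n _ (vsub x1 x0)); [exact Hx1|].
      intros i Hi. unfold vsub, vsmul. simpl. f_equal. cx_eq.
    - destruct (best_phase_exists n (iterate F k x1) x0) as [a0 Ha0].
      specialize (IH a0 Ha0).
      pose proof (best_phase_contraction n N A x0 lam2 hA hlam eps (iterate F k x1) a0 a
                    heps Ha0 Ha (Rlt_le _ _ IH)) as Hstep.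
      fold F in Hstep. change (iterate F (S k) x1) with (F (iterate F k x1)).
      pose proof (vnorm_ge0 n (vsub (vsmul a0 (iterate F k x1)) x0)).
      assert (lam2 ^ 2 + eps < 1) by lra. nra. }
  intros k ak ak1 Hk Hk1.
  apply (best_phase_contraction n N A x0 lam2 hA hlam eps); auto.
  left. now apply Hball.
Qed.
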